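(* Let $d\ge 1$. For every $R>0$ there exists a constant $C_R>0$ such that $\mu(Q(x,2r)) \le C_R\,\mu(Q(x,r))$ for all $x\in\mathbb{R}^d_+$ and $0<r\le R$. The same holds with $Q$ replaced by $B$ or by $D$.
   Context: $\mathbb{R}^d_+=(0,\infty)^d$ and $\mu$ is the measure on $\mathbb{R}^d_+$ with density $\exp(-|x|_1)$, $|x|_1=\sum_i|x_i|$. For $x\in\mathbb{R}^d_+$, $r>0$: $D(x,r)=\{y\in\mathbb{R}^d_+:|x-y|_1<r\}$, $B(x,r)=\{y\in\mathbb{R}^d_+:|x-y|_2<r\}$, $Q(x,r)=\{y\in\mathbb{R}^d_+:|x-y|_\infty<r\}$, with $|\cdot|_2$ Euclidean norm and $|\cdot|_\infty$ the max norm. *)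

From HB Require Import structures.
From mathcomp Require Import all_boot all_order all_algebra.
From mathcomp Require Import all_classical all_reals all_analysis.
Set Implicit Arguments. Unset Strict Implicit. Unset Printing Implicit Defensive.
Import Order.TTheory GRing.Theory Num.Theory.
Local Open Scope classical_set_scope.
Local Open Scope ring_scope.

Section defs.
Variable R : realType.

Definition Rplus (d : nat) : set (d.-tuple R) :=
  [set x | forall i : 'I_d, 0 < tnth x i].

Definition norm1 d (x : d.-tuple R) : R := \sum_(i < d) `|tnth x i|.
Definition norm2 d (x : d.-tuple R) : R := Num.sqrt (\sum_(i < d) (tnth x i) ^+ 2).
Definition normoo d (x : d.-tuple R) : R := \big[Num.max/0]_(i < d) `|tnth x i|.

Definition tsub d (x y : d.-tuple R) : d.-tuple R :=
  [tuple tnth x i - tnth y i | i < d].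

Definition Dball d (x : d.-tuple R) (r : R) : set (d.-tuple R) :=
  [set y | Rplus y /\ norm1 (tsub x y) < r].
Definition Bball d (x : d.-tuple R) (r : R) : set (d.-tuple R) :=
  [set y | Rplus y /\ norm2 (tsub x y) < r].
Definition Qball d (x : d.-tuple R) (r : R) : set (d.-tuple R) :=
  [set y | Rplus y /\ normoo (tsub x y) < r].

(* The measure mu on R^d_+ with density exp(-|x|_1) w.r.t. Lebesgue measure,
   defined by iterated Lebesgue integration (Tonelli):
   mu_0 A = 1 if the empty tuple is in A, 0 otherwise;
   mu_{d+1} A = int_{t in (0,oo)} e^{-t} mu_d {y | (t :: y) in A} dt. *)
Fixpoint mu (d : nat) : set (d.-tuple R) -> \bar R :=
  match d with
  | 0 => fun A => (\1_A [tuple] : R)%:E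
  | d'.+1 => fun A =>
      (\int[lebesgue_measure]_(t in `]0%R, +oo[)
         ((expR (- t))%:E * mu [set y | A (cons_tuple t y)]))%E
  end.

Definition local_doubling d (ball : d.-tuple R -> R -> set (d.-tuple R)) :=
  forall Rad : R, 0 < Rad ->
    exists C : R, 0 < C /\
      forall x : d.-tuple R, Rplus x -> forall r : R, (0 < r)%R -> (r <= Rad)%R ->
        (mu (ball x (2 * r)%R) <= C%:E * mu (ball x r))%E.

End defs.

From HB Require Import structures.
From mathcomp Require Import all_boot all_order all_algebra.
From mathcomp Require Import all_classical all_reals all_analysis.
From mathcomp Require Import measurable_realfun ring lra.
Import Order.TTheory GRing.Theory Num.Theory.
Local Open Scope classical_set_scope.
Local Open Scope ring_scope.

(* Q(x,r) is the product of the sets posball x_i r = (0,oo) intersected with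
   (x_i - r, x_i + r), and mu is the product of copies of nu = e^{-t} dt on (0,oo), so
   mu(Q(x,lam s)) <= c^d mu(Q(x,s)) follows from nu(posball t (lam s)) <= c nu(posball t s)
   for all t > 0.  The latter holds with c = 2 lam e^{lam s}: posball t (lam s) lies in an
   interval of length 2 lam s, posball t s contains one of length s, and the left end of
   the first is at most lam s below the right end of the second, so the density varies by
   at most e^{lam s}.  Since |.|_oo <= |.|_1, |.|_2 <= d |.|_oo, the balls D(x,r) and B(x,r)
   lie between Q(x,r/d) and Q(x,r), and their doubling reduces to that of Q with lam = 2d. *)

Section ge0_le_integral_nonmeas.
Local Open Scope ereal_scope.
Context dT (T : measurableType dT) (R : realType) (m : {measure set T -> \bar R}).

(* Unlike [ge0_le_integral], no measurability is required: the integrands defining [mu]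
   involve [mu] of sections, whose measurability is not available. *)
Lemma ge0_le_integral_nonmeas (D : set T) (f g : T -> \bar R) :
  (forall x, D x -> 0 <= f x) -> (forall x, D x -> f x <= g x) ->
  \int[m]_(x in D) f x <= \int[m]_(x in D) g x.
Proof.
move=> f0 fg.
have g0 x : D x -> 0 <= g x by move=> Dx; exact: le_trans (f0 x Dx) (fg x Dx).
rewrite !ge0_integralE//; apply: ereal_sup_le => _ [h /= hf <-].
exists h => //= x; apply: le_trans (hf x) _.
by rewrite /patch; case: ifP => // /set_mem; exact: fg.
Qed.

End ge0_le_integral_nonmeas.

Section mu_box.
Context {R : realType}.
Local Open Scope ereal_scope.

Lemma mu_ge0 d (A : set (d.-tuple R)) : 0 <= mu A.
Proof.
elim: d A => [|d IH] A /=; first by rewrite lee_fin indicE; case: (_ \in _).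
by apply: integral_ge0 => t _; rewrite mule_ge0 ?lee_fin ?expR_ge0.
Qed.

Lemma le_mu {d} {A B : set (d.-tuple R)} : A `<=` B -> mu A <= mu B.
Proof.
elim: d A B => [|d IH] A B AB /=.
  rewrite lee_fin !indicE; case: (boolP (_ \in A)) => //.
  by move/set_mem/AB/mem_set => ->.
apply: ge0_le_integral_nonmeas => t _.
  by rewrite mule_ge0 ?lee_fin ?expR_ge0 ?mu_ge0.
by rewrite lee_wpmul2l ?lee_fin ?expR_ge0// IH // => y /AB.
Qed.

Lemma mu_set0 d : mu (@set0 (d.-tuple R)) = 0.
Proof.
elim: d => [|d IH] /=; first by rewrite indicE in_set0.
rewrite (eq_integral (fun _ => 0)) ?integral0// => t _.
by rewrite (_ : [set y | _] = set0) ?IH ?mule0.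
Qed.

Definition box d (A : nat -> set R) : set (d.-tuple R) :=
  [set y | forall i : 'I_d, A i (tnth y i)].

Definition nu (A : set R) : \bar R :=
  \int[lebesgue_measure]_(t in `]0%R, +oo[) (expR (- t) * \1_A t)%:E.

Lemma nu_ge0 A : 0 <= nu A.
Proof. by apply: integral_ge0 => t _; rewrite lee_fin mulr_ge0 ?expR_ge0. Qed.

Lemma le_nu {A B : set R} : A `<=` B -> nu A <= nu B.
Proof.
move=> AB; apply: ge0_le_integral_nonmeas => t _.
  by rewrite lee_fin mulr_ge0 ?expR_ge0.
rewrite lee_fin ler_wpM2l ?expR_ge0// !indicE.
by case: (boolP (t \in A)) => // /set_mem/AB/mem_set ->.
Qed.

Lemma box_cons_section d (A : nat -> set R) t :
  [set y : d.-tuple R | box d.+1 A (cons_tuple t y)] =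
  if t \in A 0%N then box d (A \o succn) else set0.
Proof.
apply/seteqP; split => y /=.
  move=> H; case: ifPn => [_ j|/negP[]]; last first.
    by apply/mem_set; have := H ord0; rewrite (tnth_nth 0%R).
  by have := H (lift ord0 j); rewrite tnthS.
case: ifPn => // /set_mem tA H [[|k] hk]; rewrite (tnth_nth 0%R) //=.
have hk' : (k < d)%N by rewrite -ltnS.
by have := H (Ordinal hk'); rewrite (tnth_nth 0%R).
Qed.

Lemma mu_box_cons d (A : nat -> set R) : measurable (A 0%N) ->
  mu (box d.+1 A) = nu (A 0%N) * mu (box d (A \o succn)).
Proof.
move=> mA /=; rewrite -ge0_integralZr ?mu_ge0//; last first.
  apply/measurable_EFinP; apply: measurable_funM; last exact: measurable_indic.
  exact: measurableT_comp.
apply: eq_integral => t _; rewrite box_cons_section indicE.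
by case: (t \in A 0%N); rewrite ?mulr1 ?mulr0 ?mu_set0 ?mule0 ?mul0e.
Qed.

Lemma mu_box_le d (A B : nat -> set R) (c : R) : (0 <= c)%R ->
  (forall n, measurable (A n)) -> (forall n, measurable (B n)) ->
  (forall n, nu (A n) <= c%:E * nu (B n)) ->
  mu (box d A) <= (c ^+ d)%:E * mu (box d B).
Proof.
move=> c0; elim: d A B => [|d IH] A B mA mB AB.
  by rewrite expr0 mul1e (_ : box 0 A = box 0 B) //; apply/seteqP; split=> y _ [].
rewrite !mu_box_cons // exprS EFinM -muleA (muleCA (c ^+ d)%:E) muleA.
apply: lee_pmul; rewrite ?nu_ge0 ?mu_ge0 ?AB //.
by apply: IH => n; [exact: mA|exact: mB|exact: AB].
Qed.

End mu_box.

Section posball.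
Context {R : realType}.
Local Open Scope ereal_scope.

Lemma integral_pos_indic_itv (a b k : R) : (0 <= a)%R -> (a <= b)%R -> (0 <= k)%R ->
  \int[lebesgue_measure]_(t in `]0%R, +oo[) (k * \1_(`]a, b[ : set R) t)%:E =
  (k * (b - a))%:E.
Proof.
move=> a0 ab k0; under eq_integral do rewrite EFinM.
rewrite ge0_integralZl_EFin //; last first.
  by apply/measurable_EFinP; exact: measurable_indic.
rewrite integral_indic // setIidl; last first.
  move=> t /=; rewrite !in_itv /= andbT => /andP[ta _].
  exact: le_lt_trans ta.
rewrite EFinM; congr (_ * _).
apply: eq_trans (lebesgue_measure_itv `]a, b[) _; rewrite /= lte_fin -EFinB.
case: ltP => // ba; suff -> : b = a by rewrite subrr.
by apply/eqP; rewrite eq_le ab ba.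
Qed.

Lemma nu_itv_le {a b : R} : (0 <= a)%R -> (a <= b)%R ->
  nu `]a, b[ <= (expR (- a) * (b - a))%:E.
Proof.
move=> a0 ab; rewrite -integral_pos_indic_itv ?expR_ge0//.
apply: ge0_le_integral_nonmeas => t _; first by rewrite lee_fin mulr_ge0 ?expR_ge0.
rewrite lee_fin indicE; case: (boolP (t \in _)) => [|_]; last by rewrite !mulr0.
by rewrite inE /= in_itv /= => /andP[ta _]; rewrite !mulr1 ler_expR lerN2 ltW.
Qed.

Lemma nu_itv_ge {a b : R} : (0 <= a)%R -> (a <= b)%R ->
  (expR (- b) * (b - a))%:E <= nu `]a, b[.
Proof.
move=> a0 ab; rewrite -integral_pos_indic_itv ?expR_ge0//.
apply: ge0_le_integral_nonmeas => t _; first by rewrite lee_fin mulr_ge0 ?expR_ge0.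
rewrite lee_fin indicE; case: (boolP (t \in _)) => [|_]; last by rewrite !mulr0.
by rewrite inE /= in_itv /= => /andP[_ tb]; rewrite !mulr1 ler_expR lerN2 ltW.
Qed.

Definition posball (x s : R) : set R := [set t | (0 < t)%R /\ (`|x - t| < s)%R].

Lemma measurable_posball x s : measurable (posball x s).
Proof.
rewrite (_ : posball x s = `]0%R, +oo[ `&` `](x - s)%R, (x + s)%R[).
  by apply: measurableI; exact: measurable_itv.
by apply/seteqP; split => t; rewrite /posball /= !in_itv /= andbT ltr_distlC => -[-> ->].
Qed.

Lemma posball_sub_itv x s :
  posball x s `<=` `](Num.max 0 (x - s))%R, (x + s)%R[.
Proof.
move=> t [t0]; rewrite ltr_distlC /= in_itv /= gt_max => /andP[xt ->].
by rewrite t0 xt.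
Qed.

Lemma itv_sub_posball x s : (0 < x)%R ->
  `](Num.max 0 (x - s))%R, (Num.max 0 (x - s) + s)%R[ `<=` posball x s.
Proof.
move=> x0 t; rewrite /= in_itv /= gt_max => /andP[/andP[t0 xt] ts].
split=> //; rewrite ltr_distlC xt /=.
by move: ts; rewrite maxEle; case: ifP => _; lra.
Qed.

Lemma nu_posball_scale (x s lam M : R) : (0 < x)%R -> (0 < s)%R ->
  (1 <= lam)%R -> (lam * s <= M)%R ->
  nu (posball x (lam * s)) <= (2 * lam * expR M)%:E * nu (posball x s).
Proof.
move=> x0 s0 lam1 lsM.
set a := Num.max 0%R (x - lam * s)%R; set b := Num.max 0%R (x - s)%R.
have a0 : (0 <= a)%R by rewrite le_max lexx.
have b0 : (0 <= b)%R by rewrite le_max lexx.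
have xa : (x - lam * s <= a)%R by rewrite le_max lexx orbT.
have sls : (s <= lam * s)%R by rewrite ler_peMl // ltW.
have bsa : (b + s - a <= lam * s)%R.
  by rewrite /a /b; case: (leP 0%R (x - s)%R); case: (leP 0%R (x - lam * s)%R) => *; lra.
have ax : (a <= x + lam * s)%R by rewrite ge_max; apply/andP; split; lra.
have ub : nu (posball x (lam * s)) <= (expR (- a) * (2 * lam * s))%:E.
  apply: le_trans (le_nu (posball_sub_itv x (lam * s))) _.
  apply: le_trans (nu_itv_le a0 ax) _.
  by rewrite lee_fin ler_wpM2l ?expR_ge0 //; lra.
have lb : (expR (- (b + s)) * s)%:E <= nu (posball x s).
  have bbs : (b <= b + s)%R by lra.
  apply: le_trans _ (le_nu (itv_sub_posball x s x0)).
  by have := nu_itv_ge b0 bbs; rewrite addrAC subrr add0r.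
apply: le_trans ub (le_trans _ (lee_wpmul2l _ lb)); last first.
  by rewrite lee_fin !mulr_ge0 ?expR_ge0//; lra.
have exp_ratio : (expR (- a) <= expR M * expR (- (b + s)))%R by rewrite -expRD ler_expR; lra.
rewrite -EFinM lee_fin.
rewrite [X in (_ <= X)%R](_ : _ = expR M * expR (- (b + s)) * (2 * lam * s))%R; last by ring.
by rewrite ler_wpM2r //; nra.
Qed.

End posball.

Section norms.
Context {R : realType} {d : nat}.
Implicit Types z : d.-tuple R.

Lemma normoo_ge0 z : 0 <= normoo z.
Proof. exact: bigmax_ge_id. Qed.

Lemma le_tnth_normoo z i : `|tnth z i| <= normoo z.
Proof. exact: le_bigmax. Qed.

Lemma normoo_le_norm1 z : normoo z <= norm1 z.
Proof.
apply: bigmax_le => [|i _]; first exact: sumr_ge0.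
by rewrite /norm1 (bigD1 i) //= lerDl sumr_ge0.
Qed.

Lemma normoo_le_norm2 z : normoo z <= norm2 z.
Proof.
apply: bigmax_le => [|i _]; first exact: sqrtr_ge0.
rewrite /norm2 -sqrtr_sqr ler_sqrt ?sumr_ge0 // => [|j _]; last exact: sqr_ge0.
by rewrite (bigD1 i) //= lerDl sumr_ge0 // => j _; exact: sqr_ge0.
Qed.

Lemma norm1_le_normoo z : norm1 z <= d%:R * normoo z.
Proof.
apply: (@le_trans _ _ (\sum_(i < d) normoo z)).
  by apply: ler_sum => i _; exact: le_tnth_normoo.
by rewrite sumr_const card_ord mulr_natl.
Qed.

Lemma norm2_le_normoo z : norm2 z <= d%:R * normoo z.
Proof.
have m0 := normoo_ge0 z.
rewrite /norm2 -(ger0_norm (mulr_ge0 (ler0n _ d) m0)) -sqrtr_sqr ler_sqrt ?sqr_ge0 //.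
apply: (@le_trans _ _ (\sum_(i < d) normoo z ^+ 2)).
  apply: ler_sum => i _; rewrite -real_normK ?num_real //.
  by rewrite lerXn2r ?nnegrE ?le_tnth_normoo.
rewrite sumr_const card_ord -[_ *+ d]mulr_natl exprMn; apply: ler_wpM2r; first exact: sqr_ge0.
by rewrite -natrX ler_nat; case: (d) => // n; rewrite leq_pmulr.
Qed.

(* The default [1] of [nth] is never read, but being positive it makes [0 < nth 1 x n]
   hold for every [n]. *)
Lemma Qball_box (x : d.-tuple R) r : 0 < r ->
  Qball x r = box d (fun n => posball (nth 1 x n) r).
Proof.
move=> r0; apply/seteqP; split => y /=.
  case=> yp /bigmax_ltP [_ H] i; split; first exact: yp.
  by have := H i isT; rewrite /tsub tnth_mktuple (tnth_nth 1).
move=> H; split; first by move=> i; case: (H i).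
apply/bigmax_ltP; split => // i _; rewrite /tsub tnth_mktuple (tnth_nth 1).
by case: (H i).
Qed.

Definition normball (N : d.-tuple R -> R) (x : d.-tuple R) (r : R) : set (d.-tuple R) :=
  [set y | Rplus y /\ N (tsub x y) < r].

Lemma normball_sub_Qball N x r : (forall z, normoo z <= N z) ->
  normball N x r `<=` Qball x r.
Proof. by move=> N_ge y [yp yr]; split => //; exact: le_lt_trans yr. Qed.

Lemma Qball_sub_normball N k x r : 0 < k -> (forall z, N z <= k * normoo z) ->
  Qball x (r / k) `<=` normball N x r.
Proof.
move=> k0 N_le y [yp yr]; split => //; apply: le_lt_trans (N_le _) _.
by rewrite mulrC -ltr_pdivlMr.
Qed.

Lemma local_doubling_normball N k : 1 <= k ->
  (forall z, normoo z <= N z) -> (forall z, N z <= k * normoo z) ->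
  local_doubling (normball N).
Proof.
move=> k1 N_ge N_le Rad Rad0.
have k0 : 0 < k by lra.
pose c := 2 * (2 * k) * expR (2 * Rad).
have c0 : 0 < c by rewrite !mulr_gt0 ?expR_gt0.
exists (c ^+ d); split; first exact: exprn_gt0.
move=> x xp r r0 rRad.
have s0 : 0 < r / k by rewrite divr_gt0.
have r2 : 2 * r = (2 * k) * (r / k) by field; rewrite gt_eqF.
have x_gt0 n : 0 < nth 1 x n.
  case: (ltnP n d) => [nd|]; last by move=> dn; rewrite nth_default ?size_tuple.
  by have := xp (Ordinal nd); rewrite (tnth_nth 1).
apply: le_trans (le_mu (normball_sub_Qball N x (2 * r) N_ge)) _.
apply: le_trans _ (lee_wpmul2l _ (le_mu (Qball_sub_normball N k x r k0 N_le))); last first.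
  by rewrite lee_fin exprn_ge0 // ltW.
have ks0 : 0 < 2 * k * (r / k) by rewrite -r2 mulr_gt0.
rewrite r2 !Qball_box //.
apply: mu_box_le => [|n|n|n]; [exact: ltW|exact: measurable_posball|exact: measurable_posball|].
by apply: nu_posball_scale => //; [lra | rewrite -r2; lra].
Qed.

End norms.

Theorem lemma2p2 (R : realType) (d : nat) : (1 <= d)%N ->
  local_doubling (@Qball R d) /\ local_doubling (@Bball R d) /\
  local_doubling (@Dball R d).
Proof.
move=> d_gt0; have d1 : 1 <= d%:R :> R by rewrite ler1n.
have -> : @Qball R d = normball (@normoo R d) by [].
have -> : @Bball R d = normball (@norm2 R d) by [].
have -> : @Dball R d = normball (@norm1 R d) by [].
split; [|split].
- by apply: (local_doubling_normball _ 1) => // z; rewrite mul1r.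
- exact: local_doubling_normball _ _ d1 normoo_le_norm2 norm2_le_normoo.
- exact: local_doubling_normball _ _ d1 normoo_le_norm1 norm1_le_normoo.
Qed.
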